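(* $w(\mathsf{T_f}(2))\ge\omega+1$.
   Context: $2$ denotes the two-element chain $0<1$. Trees: for a non-empty quasi-order $Q$, $\mathsf{T_f}(Q)$ is the smallest class containing the leaf $\cdot q$ for each $q\in Q$, and containing $\cdot(\tau_0,\dots,\tau_{k-1})$ (an unlabelled root whose children are the $\tau_i$) for every finite set $\{\tau_0,\dots,\tau_{k-1}\}\subseteq\mathsf{T_f}(Q)$ with $k\ge1$. Its order $\le_T$ is defined recursively: - $\cdot x\le_T\cdot y$ iff $x\le_Q y$; - $\cdot x\le_T\cdot(\tau_j)_{j<l}$ iff $\cdot x\le_T\tau_j$ for some $j$; - $\cdot(\sigma_i)_{i<k}\le_T\cdot(\tau_j)_{j<l}$ iff every $\sigma_i$ is $\le_T$ some $\tau_j$; - a non-leaf tree is never $\le_T$ a leaf. Width: for a well-quasi-order $P$, $w(P)=\sup_{x\in P}(w(L_\bot(x))+1)$, where $L_\bot(x)=\{y\in P: x\not\le y\text{ and }y\not\le x\}$ carries the induced order. This is a well-founded recursion. *)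

From mathcomp Require Import all_boot.
Set Implicit Arguments. Unset Strict Implicit. Unset Printing Implicit Defensive.

Inductive ord : Type :=
| OZ : ord
| OS : ord -> ord
| OL : (nat -> ord) -> ord.   (* sup_n f n *)

Fixpoint ofin (n : nat) : ord := if n is m.+1 then OS (ofin m) else OZ.
Definition omega : ord := OL ofin.

(* For a quasi-order (T, le) restricted to the carrier A,
   width_ge le A a  <->  w(A) >= a, where
   w(P) = sup_{x in P} (w(L_bot(x)) + 1). *)
Section Width.
Variables (T : Type) (le : T -> T -> Prop).

Definition Lbot (A : T -> Prop) (x : T) : T -> Prop :=
  fun y => A y /\ ~ le x y /\ ~ le y x.

Fixpoint width_ge (A : T -> Prop) (a : ord) : Prop :=
  match a with
  | OZ => True
  | OS b => exists x, A x /\ width_ge (Lbot A x) b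
  | OL f => forall n, width_ge A (f n)
  end.
End Width.

(* Labels in 2 = {0 < 1} are booleans (false = 0, true = 1). *)
Inductive tree : Type :=
| Leaf : bool -> tree
| Node : seq tree -> tree.

(* a tree is in T_f(2) iff every internal node has at least one child *)
Fixpoint wf_tree (t : tree) : Prop :=
  match t with
  | Leaf _ => True
  | Node ts => ts <> [::] /\
      (fix allwf (l : seq tree) : Prop :=
         match l with [::] => True | s :: l' => wf_tree s /\ allwf l' end) ts
  end.

Definition le2 (x y : bool) : bool := x ==> y.

Fixpoint leaf_le (x : bool) (t : tree) : bool :=
  match t with
  | Leaf y => le2 x y
  | Node ts =>
      (fix ex (l : seq tree) : bool :=
         match l with [::] => false | u :: l' => leaf_le x u || ex l' end) ts
  end.

Fixpoint tree_le (s t : tree) : bool :=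
  match s with
  | Leaf x => leaf_le x t
  | Node ss =>
      match t with
      | Leaf _ => false
      | Node ts =>
          (fix al (l : seq tree) : bool :=
             match l with
             | [::] => true
             | s' :: l' => has (tree_le s') ts && al l'
             end) ss
      end
  end.

(** The witness for the successor step is the pivot [•(•(•(·1)))]: a tree lies
    above it iff it has a [1]-leaf at depth at least 3.  Below the pivot we find
    arbitrarily long finite antichains: with [stick j] the unary path of length
    [j] ending in a [0]-leaf and [flag k = •(·1, stick k)], both families are
    chains isomorphic to [nat], so the trees [•(flag k, stick (2n - k + 4))],
    [k < n], are pairwise incomparable: no flag lies below a stick, these sticks
    are too tall to lie below a flag [flag m] with [m < n], and so coordinates
    must compare directly, the first increasing and the second decreasing in [k].  Hence [w(L_⊥(pivot)) ≥ n] for every [n]. *)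

From mathcomp Require Import all_boot.
From mathcomp Require Import zify.

Section Antichains.
Variables (T : Type) (le : T -> T -> Prop).

Lemma width_ge_antichain (f : nat -> T) (n : nat) (A : T -> Prop) :
  (forall i, i < n -> A (f i)) ->
  (forall i j, i < n -> j < n -> le (f i) (f j) -> i = j) ->
  width_ge le A (ofin n).
Proof.
elim: n A => [|n IHn] A inA anti //=.
exists (f n); split; first exact: inA.
apply: IHn => [i lt_in | i j lt_in lt_jn]; last by apply: anti; lia.
split; first by apply: inA; lia.
split=> le_f; [suff: n = i by lia | suff: i = n by lia]; apply: anti le_f; lia.
Qed.

Lemma width_ge_omega (A : T -> Prop) :
  (forall n, exists f : nat -> T, (forall i, i < n -> A (f i)) /\
     (forall i j, i < n -> j < n -> le (f i) (f j) -> i = j)) ->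
  width_ge le A omega.
Proof.
by move=> antichains n; have [f [inA anti]] := antichains n;
  exact: width_ge_antichain inA anti.
Qed.

End Antichains.

Fixpoint stick (k : nat) : tree := if k is j.+1 then Node [:: stick j] else Leaf false.

Definition flag (k : nat) : tree := Node [:: Leaf true; stick k].

Lemma wf_stick k : wf_tree (stick k).
Proof. by elim: k. Qed.

Lemma leaf_le_stick b k : leaf_le b (stick k) = ~~ b.
Proof. by elim: k => [|k IHk] /=; rewrite ?IHk ?orbF //; case: b. Qed.

Lemma tree_le_stick_leaf k b : tree_le (stick k) (Leaf b) = (k == 0).
Proof. by case: k. Qed.

Lemma tree_le_stick a b : tree_le (stick a) (stick b) = (a <= b).
Proof.
elim: a b => [|a IHa] [|b] //=; first by rewrite leaf_le_stick.
by rewrite IHa orbF andbT.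
Qed.

Lemma tree_le_flag k m : tree_le (flag k) (flag m) = (k <= m).
Proof. by rewrite /= tree_le_stick_leaf tree_le_stick orbF andbT; case: k. Qed.

Lemma tree_le_flag_stick k j : tree_le (flag k) (stick j) = false.
Proof. by case: j => //= j; rewrite leaf_le_stick. Qed.

Lemma tree_le_stick_flag a m : tree_le (stick a.+1) (flag m) = (a <= m).
Proof. by rewrite /= tree_le_stick_leaf tree_le_stick orbF andbT; case: a. Qed.

Lemma tree_le_pair a b c d :
  tree_le (Node [:: a; b]) (Node [:: c; d]) =
  (tree_le a c || tree_le a d) && (tree_le b c || tree_le b d).
Proof. by rewrite /= !orbF !andbT. Qed.

Definition rung (n k : nat) : tree := Node [:: flag k; stick (n + n - k).+4].

Lemma wf_rung n k : wf_tree (rung n k).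
Proof. by do !split=> //; exact: wf_stick. Qed.

Lemma tree_le_rung n k m :
  k < n -> m < n -> tree_le (rung n k) (rung n m) -> k = m.
Proof.
move=> lt_kn lt_mn.
rewrite tree_le_pair tree_le_flag tree_le_flag_stick tree_le_stick_flag.
by rewrite tree_le_stick orbF => /andP[le_km /orP[]]; lia.
Qed.

Definition pivot : tree := Node [:: Node [:: Node [:: Leaf true]]].

Lemma pivot_not_le_rung n k : ~~ tree_le pivot (rung n k).
Proof. by case: k => [|[|k]] /=; rewrite ?leaf_le_stick. Qed.

Lemma rung_not_le_pivot n k : ~~ tree_le (rung n k) pivot.
Proof. by rewrite /= andbF. Qed.

Theorem lemma3p22 :
  width_ge (fun s t : tree => tree_le s t) wf_tree (OS omega).
Proof.
exists pivot; split; first by [].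
apply: width_ge_omega => n; exists (rung n); split=> [k _ | k m]; last first.
  exact: tree_le_rung.
split; first exact: wf_rung.
by split; apply/negP; [exact: pivot_not_le_rung | exact: rung_not_le_pivot].
Qed.
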